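(* Let $p\in P_i$ be a right link state of a rook-Brauer $n$-diagram with exactly $i$ defects, and let $d_p\in\mathcal{RB}_n(\delta,\varepsilon)$ be the diagram defined by: if $\bar a$ is isolated in $p$ then $a$ and $\bar a$ are isolated in $d_p$; if $\bar a,\bar b$ are joined by a non-propagating edge in $p$ then $d_p$ has non-propagating edges $\{a,b\}$ and $\{\bar a,\bar b\}$; if $p$ has a defect at $\bar a$ then $d_p$ has the propagating edge $\{a,\bar a\}$. If $y$ is a diagram in $J_p$, then $yd_p=\delta^{\alpha}\varepsilon^{\beta}y$, where $\alpha$ is the number of non-propagating edges in $p$ and $\beta$ is the number of isolated vertices in $p$.
   Context: Let $k$ be a unital commutative ring, $n$ a positive integer, $\delta,\varepsilon\in k$. A rook-Brauer $n$-diagram is a graph on vertices $1,\dots,n$ (left column, top to bottom) and $\bar1,\dots,\bar n$ (right column) in which each edge joins two distinct vertices and each vertex lies on at most one edge; diagrams are determined by which pairs are joined. Edges joining the two columns are propagating, edges within one column non-propagating, vertices on no edge isolated. $\mathcal{RB}_n(\delta,\varepsilon)$ is the free $k$-module on these diagrams with product: identify the right column of $d_1$ with the left column of $d_2$ (middle column); let $\alpha'$ be the number of closed loops lying in the middle column and $\beta'$ the number of other connected components lying entirely in the middle column (isolated middle vertices, or paths with both ends in the middle column); let $d_3$ join two outer vertices iff they are joined by a path; $d_1d_2=\delta^{\alpha'}\varepsilon^{\beta'} d_3$. The right link state of a diagram records, for each right vertex $\bar a$, whether it lies on a propagating edge (a defect at $\bar a$), is joined by a non-propagating edge to a specified $\bar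 b$, or is isolated. $P_i$ is the set of right link states of rook-Brauer $n$-diagrams with exactly $i$ defects. A splice replaces two defects by a non-propagating edge joining their vertices; a deletion replaces a defect by an isolated vertex. $J_p$ is the left ideal of $\mathcal{RB}_n(\delta,\varepsilon)$ spanned by the diagrams whose right link state is obtained from $p$ by a (possibly empty) sequence of splices and deletions. *)

From mathcomp Require Import all_boot all_order all_algebra.
Set Implicit Arguments. Unset Strict Implicit. Unset Printing Implicit Defensive.
Import GRing.Theory.
Local Open Scope ring_scope.

(* Vertices: (false, a) is the left vertex a, (true, a) is the right vertex a-bar. *)
Definition vtx (n : nat) := (bool * 'I_n)%type.

(* A diagram is an involution m on the vertices: m x = x means x is isolated,
   otherwise {x, m x} is an edge.  This is exactly a partial perfect matching. *)
Definition diagram (n : nat) :=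
  {m : {ffun vtx n -> vtx n} | [forall x, m (m x) == x]}.

Definition dfun n (d : diagram n) : vtx n -> vtx n := fun x => val d x.

(* Glued graph on three columns: (0,a) left column of d1, (1,a) middle column,
   (2,a) right column of d2. *)
Definition vtx3 (n : nat) := ('I_3 * 'I_n)%type.

Definition col0 : 'I_3 := @Ordinal 3 0 isT.
Definition col1 : 'I_3 := @Ordinal 3 1 isT.
Definition col2 : 'I_3 := @Ordinal 3 2 isT.

Definition emb1 n (x : vtx n) : vtx3 n := (if x.1 then col1 else col0, x.2).
Definition emb2 n (x : vtx n) : vtx3 n := (if x.1 then col2 else col1, x.2).
Definition embo n (x : vtx n) : vtx3 n := (if x.1 then col2 else col0, x.2).

Definition glue n (d1 d2 : diagram n) : rel (vtx3 n) := fun u v =>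
  [exists x, [&& emb1 x == u, emb1 (dfun d1 x) == v & dfun d1 x != x]] ||
  [exists x, [&& emb2 x == u, emb2 (dfun d2 x) == v & dfun d2 x != x]].

Definition compo n (d1 d2 : diagram n) (u : vtx3 n) : {set vtx3 n} :=
  [set w | connect (glue d1 d2) u w].

Definition components n (d1 d2 : diagram n) : {set {set vtx3 n}} :=
  [set compo d1 d2 u | u : vtx3 n].

Definition midcol n : {set vtx3 n} := [set w : vtx3 n | w.1 == col1].

(* a component lying in the middle column is a closed loop iff every vertex of it
   has degree 2 (an edge coming from d1 and an edge coming from d2) *)
Definition is_loop n (d1 d2 : diagram n) (c : {set vtx3 n}) : bool :=
  [forall w in c, (dfun d1 (true, w.2) != (true, w.2)) &&
                  (dfun d2 (false, w.2) != (false, w.2))].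

Definition nloops n (d1 d2 : diagram n) : nat :=
  #|[set c in components d1 d2 | (c \subset midcol n) && is_loop d1 d2 c]|.
Definition nmidothers n (d1 d2 : diagram n) : nat :=
  #|[set c in components d1 d2 | (c \subset midcol n) && ~~ is_loop d1 d2 c]|.

(* z is the diagram d3: two distinct outer vertices are joined in z iff they are
   joined by a path in the glued graph. *)
Definition comp_result n (d1 d2 z : diagram n) : bool :=
  [forall x, forall y, (x != y) ==>
     ((dfun z x == y) == connect (glue d1 d2) (embo x) (embo y))].

Definition RB (k : comPzRingType) (n : nat) := {ffun diagram n -> k}.

Definition rbbasis (k : comPzRingType) n (y : diagram n) : RB k n :=
  [ffun z => (z == y)%:R].

(* bilinear extension of  d1 d2 = delta^alpha' eps^beta' d3 *)
Definition rbmul (k : comPzRingType) n (delta eps : k) (a b : RB k n) : RB k n :=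
  [ffun z => \sum_(d1 : diagram n) \sum_(d2 : diagram n)
     a d1 * b d2 * (delta ^+ nloops d1 d2 * eps ^+ nmidothers d1 d2)
       * (comp_result d1 d2 z)%:R].

(* value at a-bar: None = defect, Some None = isolated, Some (Some b) = joined to b-bar *)
Definition linkstate (n : nat) := {ffun 'I_n -> option (option 'I_n)}.

Definition rls n (d : diagram n) : linkstate n :=
  [ffun a => let y := dfun d (true, a) in
     if ~~ y.1 then None
     else if y.2 == a then Some None else Some (Some y.2)].

Definition ndefects n (p : linkstate n) : nat := #|[set a | p a == None]|.

Definition Pset n (i : nat) : {set linkstate n} :=
  [set rls d | d in [pred d : diagram n | ndefects (rls d) == i]].

Definition splice n (p : linkstate n) (a b : 'I_n) : linkstate n :=
  [ffun c => if c == a then Some (Some b) else if c == b then Some (Some a) else p c].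
Definition deletion n (p : linkstate n) (a : 'I_n) : linkstate n :=
  [ffun c => if c == a then Some None else p c].

Definition sd_step n : rel (linkstate n) := fun p q =>
  [exists a, exists b, [&& a != b, p a == None, p b == None & q == splice p a b]] ||
  [exists a, (p a == None) && (q == deletion p a)].

(* y is one of the diagrams spanning J_p *)
Definition inJ n (p : linkstate n) (y : diagram n) : bool :=
  connect (@sd_step n) p (rls y).

Definition dp_fun n (p : linkstate n) : {ffun vtx n -> vtx n} :=
  [ffun x : vtx n => match p x.2 with
                     | None => (~~ x.1, x.2)
                     | Some None => x
                     | Some (Some b) => (x.1, b)
                     end].

Lemma id_diag_proof n : [forall x : vtx n, ([ffun x => x] : {ffun vtx n -> vtx n}) ([ffun x => x] x) == x].
Proof. by apply/forallP => x; rewrite !ffunE. Qed.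

Definition id_diag n : diagram n :=
  @exist _ (fun m : {ffun vtx n -> vtx n} => [forall x, m (m x) == x])
    [ffun x => x] (id_diag_proof n).

Definition is_diagram n (m : {ffun vtx n -> vtx n}) : bool := [forall x, m (m x) == x].

(* d_p (for a genuine link state the function dp_fun p is an involution, so
   insubd returns it; the default is never used in that case) *)
Definition dp n (p : linkstate n) : diagram n := insubd (id_diag n) (dp_fun p).

Definition lalpha n (p : linkstate n) : nat :=
  #|[set a : 'I_n | [exists b : 'I_n, (p a == Some (Some b)) && (a < b)%N]]|.
Definition lbeta n (p : linkstate n) : nat := #|[set a | p a == Some None]|.

From Pilot Require Import Defs.
From mathcomp Require Import all_boot all_order all_algebra.
Import GRing.Theory.
Local Open Scope ring_scope.

(* Since y lies in J_p, y and p agree at every vertex that is not a defect of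
   p, while a defect of p is, in y, a defect, an isolated vertex, or joined to
   another defect of p.  In the glued graph of y and d_p an edge {a-bar, b-bar}
   of p therefore meets the edge {a, b} of d_p in a closed loop, an isolated
   vertex of p gives an isolated middle vertex, and d_p carries each defect of
   p straight through to the right column.  Hence no other component lies in
   the middle column, and the paths between outer vertices are exactly the
   edges of y. *)

Set Implicit Arguments.
Unset Strict Implicit.
Unset Printing Implicit Defensive.

Lemma dfunK n (d : diagram n) : involutive (dfun d).
Proof. by rewrite /dfun; case: d => m /= /forallP inv_m x; apply/eqP. Qed.

Definition link_symmetric n (p : linkstate n) :=
  forall a b, p a = Some (Some b) -> p b = Some (Some a) /\ b != a.

Lemma rls_symmetric n (d : diagram n) : link_symmetric (rls d).
Proof.
move=> a b; rewrite /rls !ffunE.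
case E: (dfun d (true, a)) => [[] b'] //=; case: eqP => // b'a [<-].
rewrite -E dfunK /=; case: eqP => [ab | _]; last by split; apply/eqP.
by case: b'a.
Qed.

Lemma Pset_symmetric n i (p : linkstate n) : p \in Pset n i -> link_symmetric p.
Proof. by case/imsetP=> d _ ->; apply: rls_symmetric. Qed.

Lemma rls_joined n (d : diagram n) a b :
  rls d a = Some (Some b) -> dfun d (true, a) = (true, b).
Proof.
rewrite /rls !ffunE; case: (dfun d (true, a)) => [[] b'] //=.
by case: eqP => // _ [<-].
Qed.

Lemma rls_isolated n (d : diagram n) a :
  rls d a = Some None -> dfun d (true, a) = (true, a).
Proof.
rewrite /rls !ffunE; case: (dfun d (true, a)) => [[] b'] //=.
by case: eqP => // ->.
Qed.

Lemma rls_propagating n (d : diagram n) a :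
  (dfun d (true, a)).1 = false -> rls d a = None.
Proof. by rewrite /rls !ffunE => ->. Qed.

Lemma sd_step_fixes n (p q : linkstate n) a :
  sd_step p q -> p a != None -> q a = p a.
Proof.
case/orP=> [/existsP[a' /existsP[b' /and4P[_ /eqP pa' /eqP pb' /eqP ->]]]
          | /existsP[a' /andP[/eqP pa' /eqP ->]]] pa; rewrite ffunE.
  have [aa' | _] := eqVneq a a'; first by rewrite aa' pa' in pa.
  by have [ab' | //] := eqVneq a b'; rewrite ab' pb' in pa.
by have [aa' | //] := eqVneq a a'; rewrite aa' pa' in pa.
Qed.

Lemma inJ_rls_agree n (p : linkstate n) y :
  inJ p y -> forall a, p a != None -> rls y a = p a.
Proof.
case/connectP=> s; elim: s p => [|q s IHs] p /=; first by move=> _ ->.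
case/andP=> pq q_s y_last a pa; have qa := sd_step_fixes pq pa.
by rewrite -qa (IHs q) // qa.
Qed.

Lemma dp_fun_is_diagram n (p : linkstate n) :
  link_symmetric p -> is_diagram (dp_fun p).
Proof.
move=> p_sym; apply/forallP=> -[s a]; rewrite !ffunE /=.
by case pa: (p a) => [[b|]|] /=; rewrite ?(proj1 (p_sym _ _ pa)) ?pa ?negbK.
Qed.

Lemma dpE n (p : linkstate n) s a : link_symmetric p ->
  dfun (dp p) (s, a) = match p a with
                       | None => (~~ s, a)
                       | Some None => (s, a)
                       | Some (Some b) => (s, b)
                       end.
Proof.
by move=> p_sym; rewrite /dfun /dp insubdK ?ffunE //; apply: dp_fun_is_diagram.
Qed.

Lemma pair_neq n (s : bool) (a b : 'I_n) : b != a -> ((s, b) : vtx n) != (s, a).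
Proof. by move=> ba; apply/eqP; case=> /eqP; rewrite (negbTE ba). Qed.

Lemma glueP n (d1 d2 : diagram n) u v : glue d1 d2 u v ->
  (exists x, [/\ u = emb1 x, v = emb1 (dfun d1 x) & dfun d1 x != x]) \/
  (exists x, [/\ u = emb2 x, v = emb2 (dfun d2 x) & dfun d2 x != x]).
Proof.
by case/orP=> /existsP[x /and3P[/eqP <- /eqP <- ne]]; [left | right]; exists x.
Qed.

Lemma glue_left n (d1 d2 : diagram n) x :
  dfun d1 x != x -> glue d1 d2 (emb1 x) (emb1 (dfun d1 x)).
Proof. by move=> ne; apply/orP; left; apply/existsP; exists x; rewrite !eqxx. Qed.

Lemma glue_right n (d1 d2 : diagram n) x :
  dfun d2 x != x -> glue d1 d2 (emb2 x) (emb2 (dfun d2 x)).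
Proof. by move=> ne; apply/orP; right; apply/existsP; exists x; rewrite !eqxx. Qed.

Lemma comp_result_uniq n (d1 d2 z z' : diagram n) :
  comp_result d1 d2 z -> comp_result d1 d2 z' -> z = z'.
Proof.
move=> /forallP z_res /forallP z'_res.
have same_edges x w : x != w -> (dfun z x == w) = (dfun z' x == w).
  move=> xw; move: (z_res x) (z'_res x).
  by do 2!move=> /forallP/(_ w)/implyP/(_ xw)/eqP ->.
apply: val_inj; apply/ffunP=> x; change (dfun z x = dfun z' x).
have [z'x | z'x] := eqVneq (dfun z' x) x; last first.
  by apply/eqP; rewrite same_edges 1?eq_sym.
rewrite z'x; apply/eqP; apply: contraT => zx.
have := same_edges x (dfun z x).
by rewrite eqxx z'x eq_sym (negbTE zx) => /(_ isT).
Qed.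

Lemma comp_resultE n (d1 d2 d3 z : diagram n) :
  comp_result d1 d2 d3 -> comp_result d1 d2 z = (z == d3).
Proof.
move=> d3_res; apply/idP/eqP=> [z_res | ->] //.
exact: comp_result_uniq z_res d3_res.
Qed.

Lemma rbmul_rbbasis (k : comPzRingType) n (delta eps : k) (d1 d2 : diagram n) :
  rbmul delta eps (rbbasis k d1) (rbbasis k d2) =
    [ffun z => delta ^+ nloops d1 d2 * eps ^+ nmidothers d1 d2
                 * (comp_result d1 d2 z)%:R].
Proof.
apply/ffunP=> z; rewrite !ffunE (bigD1 d1) //= [X in _ + X]big1 ?addr0; last first.
  by move=> d ne; apply: big1 => d' _; rewrite !ffunE (negbTE ne) !mul0r.
rewrite (bigD1 d2) //= [X in _ + X]big1 ?addr0; last first.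
  by move=> d ne; rewrite !ffunE (negbTE ne) mulr0 !mul0r.
by rewrite !ffunE !eqxx !mul1r.
Qed.

Section GluedWithDp.

Variables (n : nat) (p : linkstate n) (y : diagram n).
Hypothesis p_sym : link_symmetric p.
Hypothesis y_agree : forall a, p a != None -> rls y a = p a.

Local Notation glued := (glue y (dp p)).
Local Notation compo := (compo y (dp p)).
Local Notation mid a := ((Defs.col1, a) : vtx3 n).

Lemma y_isolated a : p a = Some None -> dfun y (true, a) = (true, a).
Proof. by move=> pa; apply: rls_isolated; rewrite y_agree pa. Qed.

Lemma y_joined a b : p a = Some (Some b) -> dfun y (true, a) = (true, b).
Proof. by move=> pa; apply: rls_joined; rewrite y_agree pa. Qed.

Lemma y_propagating_defect a : (dfun y (true, a)).1 = false -> p a = None.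
Proof.
move=> prop; apply/eqP; apply: contraT => pa.
have := y_agree pa; rewrite rls_propagating // => /esym/eqP.
by rewrite (negbTE pa).
Qed.

Lemma y_defect_partner a b :
  dfun y (true, a) = (true, b) -> p a = None -> p b = None.
Proof.
move=> yab pa; apply/eqP; apply: contraT => pb.
have yba : dfun y (true, b) = (true, a) by rewrite -yab dfunK.
have := y_agree pb; rewrite /rls ffunE yba /=; case: eqP => [ab | _].
  by move: pb; rewrite -ab pa.
by move=> /esym/p_sym[]; rewrite pa.
Qed.

Lemma glued_defect a : p a = None -> glued (mid a) (Defs.col2, a).
Proof.
move=> pa; have := @glue_right _ y (dp p) (false, a).
by rewrite dpE // pa; apply; apply/eqP; case.
Qed.

Definition right_nondefect (x : vtx n) := x.1 && (p x.2 != None).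

Lemma right_nondefect_y x : right_nondefect (dfun y x) = right_nondefect x.
Proof.
rewrite /right_nondefect; case: x => [[] a] /=; last first.
  case yx: (dfun y (false, a)) => [[] a'] //=.
  by rewrite y_propagating_defect // -yx dfunK.
case ya: (dfun y (true, a)) => [[] a'] /=.
  2: by rewrite y_propagating_defect ?ya.
have ya' : dfun y (true, a') = (true, a) by rewrite -ya dfunK.
have [pa | pa] := eqVneq (p a) None; first by rewrite (y_defect_partner ya pa).
by apply: contra_neq pa => /(y_defect_partner ya').
Qed.

(* A component invariant: an edge of d_p joins a middle defect a of p to the
   right vertex a, or middle vertices a, b with {a-bar, b-bar} an edge of p,
   hence of y. *)
Definition label (u : vtx3 n) : bool * {set vtx n} :=
  if u.1 == Defs.col0 then (false, [set (false, u.2); dfun y (false, u.2)])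
  else ((u.1 == Defs.col1) && (p u.2 != None),
        [set (true, u.2); dfun y (true, u.2)]).

Lemma label_emb1 x : label (emb1 x) = (right_nondefect x, [set x; dfun y x]).
Proof. by case: x => [[] a]. Qed.

Lemma label_emb2 x :
  label (emb2 x) =
    (~~ x.1 && (p x.2 != None), [set (true, x.2); dfun y (true, x.2)]).
Proof. by case: x => [[] a]. Qed.

Lemma label_embo x : label (embo x) = (false, [set x; dfun y x]).
Proof. by case: x => [[] a]. Qed.

Lemma label_glued u v : glued u v -> label u = label v.
Proof.
case/glueP=> [[x [-> -> _]] | [[s a] [-> -> ne]]].
  by rewrite !label_emb1 dfunK right_nondefect_y setUC.
rewrite !label_emb2 /=; move: ne; rewrite !dpE //.
case pa: (p a) => [[b|]|] /=; last by rewrite pa !andbF.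
  by have [pb _] := p_sym pa; rewrite pb (y_joined pa) (y_joined pb) setUC.
by rewrite eqxx.
Qed.

Lemma label_connect u v : connect glued u v -> label u = label v.
Proof.
move=> uv; have label_closed : closed glued [pred w | label w == label u].
  by move=> w1 w2 /label_glued w12; rewrite !inE w12.
by have := closed_connect label_closed uv; rewrite !inE eqxx => /esym/eqP.
Qed.

Lemma connect_y_edge_emb1 (x : vtx n) :
  (x.1 -> p x.2 = None) -> dfun y x != x ->
  connect glued (emb1 x) (embo (dfun y x)).
Proof.
move=> x_defect ne; apply: connect_trans (connect1 (glue_left _ ne)) _.
case yx: (dfun y x) => [[] c] //; apply/connect1/glued_defect.
case: x x_defect ne yx => [[] a] /= x_defect ne yx.
  exact: y_defect_partner yx (x_defect isT).
by apply: y_propagating_defect; rewrite -yx dfunK.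
Qed.

Lemma connect_y_edge (x : vtx n) :
  dfun y x != x -> connect glued (embo x) (embo (dfun y x)).
Proof.
case: x => [[] a] ne; last exact: connect_y_edge_emb1.
have -> : embo (true, a) = emb2 (true, a) by [].
case pa: (p a) => [[b|]|].
- rewrite (y_joined pa); apply: connect1.
  have := @glue_right _ y (dp p) (true, a); rewrite dpE // pa; apply.
  exact/pair_neq/(p_sym pa).2.
- by move: ne; rewrite y_isolated ?eqxx.
- have to_mid : glued (emb2 (true, a)) (mid a).
    have := @glue_right _ y (dp p) (true, a); rewrite dpE // pa.
    by apply; apply/eqP; case.
  exact: connect_trans (connect1 to_mid) (@connect_y_edge_emb1 (true, a) _ ne).
Qed.

Lemma comp_result_dp : comp_result y (dp p) y.
Proof.
apply/forallP=> x; apply/forallP=> w; apply/implyP=> xw.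
apply/eqP; apply/idP/idP.
  by move=> /eqP yx; rewrite -yx; apply: connect_y_edge; rewrite eq_sym yx.
move/label_connect; rewrite !label_embo => -[xw_edge].
have : w \in [set x; dfun y x] by rewrite xw_edge set21.
by case/set2P=> [wx | ->]; [rewrite wx eqxx in xw | rewrite eqxx].
Qed.

Lemma compo_mid_col u :
  compo u \subset midcol n -> u.1 = Defs.col1 /\ p u.2 != None.
Proof.
move/subsetP=> sub; have u1 : u.1 = Defs.col1.
  by apply/eqP; have := sub u; rewrite !inE connect0; apply.
split=> //; apply: contraT; rewrite negbK => /eqP pu.
have : (Defs.col2, u.2) \in midcol n.
  apply: sub; rewrite inE; case: u u1 pu => _ a /= -> pa.
  exact/connect1/glued_defect.
by rewrite inE.
Qed.

Lemma mid_component c : c \in components y (dp p) -> c \subset midcol n ->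
  exists2 a, p a != None & c = compo (mid a).
Proof.
case/imsetP=> u _ -> /compo_mid_col[u1 pu]; exists u.2 => //.
by case: u u1 pu => _ a /= ->.
Qed.

Lemma compo_mid_vertex a w : p a != None -> w \in compo (mid a) ->
  w.1 = Defs.col1 /\ (true, w.2) \in [set (true, a); dfun y (true, a)].
Proof.
rewrite inE => pa /label_connect; rewrite /label /= pa.
case: ifP => [/eqP -> // | _] [/esym/andP[/eqP w1 _] ->].
by rewrite set21.
Qed.

Lemma compo_mid_subset a : p a != None -> compo (mid a) \subset midcol n.
Proof.
by move=> pa; apply/subsetP=> w /(compo_mid_vertex pa)[w1 _]; rewrite inE w1.
Qed.

Lemma compo_isolated a : p a = Some None -> compo (mid a) = [set mid a].
Proof.
move=> pa; apply/setP=> w; rewrite in_set1.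
apply/idP/eqP=> [|->]; last by rewrite inE connect0.
case/compo_mid_vertex; first by rewrite pa.
by rewrite y_isolated // setUid => w1 /set1P[w2]; case: w w1 w2 => ? ? /= -> ->.
Qed.

Lemma compo_joined a b :
  p a = Some (Some b) -> compo (mid a) = [set mid a; mid b].
Proof.
move=> pa; apply/setP=> w; apply/idP/idP.
  case/compo_mid_vertex; first by rewrite pa.
  rewrite (y_joined pa) => w1 /set2P[] [w2]; apply/set2P; [left | right];
    by case: w w1 w2 => ? ? /= -> ->.
case/set2P=> ->; rewrite inE; first exact: connect0.
apply: connect1; have := @glue_right _ y (dp p) (false, a); rewrite dpE // pa.
by apply; apply/pair_neq/(p_sym pa).2.
Qed.

Lemma is_loop_joined a b :
  p a = Some (Some b) -> is_loop y (dp p) [set mid a; mid b].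
Proof.
move=> pa; have [pb ba] := p_sym pa.
apply/forall_inP=> w /set2P[] -> /=.
  by rewrite !dpE ?pa // (y_joined pa) !pair_neq.
by rewrite !dpE ?pb // (y_joined pb) !pair_neq // eq_sym.
Qed.


Lemma isolated_not_loop a : p a = Some None -> ~~ is_loop y (dp p) [set mid a].
Proof.
move=> pa; apply/negP=> /forall_inP/(_ (mid a)).
by rewrite set11 /= dpE // pa eqxx andbF => /(_ isT).
Qed.

Lemma nmidothers_dp : nmidothers y (dp p) = lbeta p.
Proof.
rewrite /nmidothers /lbeta.
have -> : [set c in components y (dp p)
             | (c \subset midcol n) && ~~ is_loop y (dp p) c]
    = (fun a => [set mid a]) @: [set a | p a == Some None].
  apply/setP=> c; rewrite inE; apply/andP/imsetP.
    case=> c_comp /andP[c_mid c_nl].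
    have [a pa c_def] := mid_component c_comp c_mid.
    case pa_: (p a) pa => [[b|]|] // _.
      by move: c_nl; rewrite c_def (compo_joined pa_) (is_loop_joined pa_).
    by exists a; rewrite ?inE ?pa_ // c_def compo_isolated.
  case=> a; rewrite inE => /eqP pa ->; rewrite -(compo_isolated pa).
  split; first by apply/imsetP; exists (mid a).
  by rewrite compo_mid_subset ?pa // (compo_isolated pa) isolated_not_loop.
rewrite card_imset // => a b /setP/(_ (mid a)).
by rewrite !inE eqxx => /esym/eqP[].
Qed.

Lemma nloops_dp : nloops y (dp p) = lalpha p.
Proof.
rewrite /nloops /lalpha.
set A := [set a | [exists b, (p a == Some (Some b)) && (a < b)%N]].
have -> : [set c in components y (dp p)
             | (c \subset midcol n) && is_loop y (dp p) c]
    = (fun a => compo (mid a)) @: A.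
  apply/setP=> c; rewrite inE; apply/andP/imsetP.
    case=> c_comp /andP[c_mid c_loop].
    have [a pa c_def] := mid_component c_comp c_mid; subst c.
    case pa_: (p a) pa c_loop => [[b|]|] // _; last first.
      by rewrite compo_isolated // (negbTE (isolated_not_loop pa_)).
    have [pb ba] := p_sym pa_; case: (ltngtP a b) => ab _.
    - by exists a => //; rewrite inE; apply/existsP; exists b; rewrite pa_ eqxx.
    - exists b; first by rewrite inE; apply/existsP; exists a; rewrite pb eqxx.
      by rewrite (compo_joined pa_) (compo_joined pb) setUC.
    - by rewrite (ord_inj ab) eqxx in ba.
  case=> a; rewrite inE => /existsP[b /andP[/eqP pa _]] ->.
  split; first by apply/imsetP; exists (mid a).
  by rewrite compo_mid_subset ?pa // (compo_joined pa) (is_loop_joined pa).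
rewrite card_in_imset // => a a'; rewrite !inE.
move=> /existsP[b /andP[/eqP pa ab]] /existsP[b' /andP[/eqP pa' ab']].
rewrite (compo_joined pa) (compo_joined pa') => /setP/(_ (mid a)).
rewrite set21 => /esym/set2P[] [] // ab'_eq; have [pb' _] := p_sym pa'.
move: pa; rewrite ab'_eq pb' => -[b_eq]; subst b.
by have := ltn_trans ab ab'; rewrite ab'_eq ltnn.
Qed.

End GluedWithDp.

Theorem lemma7p5 (k : comPzRingType) (n : nat) (delta eps : k) (i : nat)
    (p : linkstate n) (y : diagram n) :
  (0 < n)%N ->
  p \in Pset n i ->
  inJ p y ->
  rbmul delta eps (rbbasis k y) (rbbasis k (dp p)) =
    [ffun z => delta ^+ lalpha p * eps ^+ lbeta p * rbbasis k y z].
Proof.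
move=> _ p_Pi y_Jp.
have p_sym := Pset_symmetric p_Pi; have y_agree := inJ_rls_agree y_Jp.
rewrite rbmul_rbbasis (nloops_dp p_sym y_agree) (nmidothers_dp p_sym y_agree).
by apply/ffunP=> z; rewrite !ffunE (comp_resultE _ (comp_result_dp p_sym y_agree)).
Qed.
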